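(* Let $k\ge3$. Then $$J_{-1}E\equiv \beta\, L(-2)^2E \pmod{C_2(V_L^+)},\qquad \beta=\frac{64k^2-16k-18}{(4k-1)(4k-9)}.$$
   Context: $L=\mathbb{Z}\alpha$, $\langle\alpha,\alpha\rangle=2k$; $V_L=M(1)\otimes\mathbb{C}[L]$ the lattice VOA with conformal vector $\omega=\frac1{4k}\alpha(-1)^2\mathbf1$, $L(n)=\omega_{n+1}$; $V_L^+$ the fixed points of the involution $\theta$ lifted from $-1$ on $L$; $E=e^{\alpha}+e^{-\alpha}$; $J=\frac{1}{4k^2}\alpha(-1)^4\mathbf1-\frac1k\alpha(-3)\alpha(-1)\mathbf1+\frac{3}{4k}\alpha(-2)^2\mathbf1$ and $J_{-1}$ is its $(-1)$-mode. $C_2(V)$ is the span of $\{v_{-2}u:u,v\in V\}$. *)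

(* lattice VOA V_L, L = Z alpha, <alpha,alpha> = 2k,
   built concretely on the basis  e^{m alpha} (x) prod_i alpha(-(i+1))^{l(i)},
   with vertex operators defined by the FLM formulas (trivial cocycle). *)
From HB Require Import structures.
From mathcomp Require Import all_boot all_order all_algebra.
From mathcomp Require Import finmap multiset.
From mathcomp.multinomials Require Import monalg.

Set Implicit Arguments.
Unset Strict Implicit.
Unset Printing Implicit Defensive.

Import Order.TTheory GRing.Theory Num.Theory.
Local Open Scope ring_scope.

Section LatticeVOA.
Variable C : numClosedFieldType.   (* the complex numbers (abstractly) *)
Variable k : nat.                   (* <alpha,alpha> = 2k *)

(* basis index: (m, l) stands for  e^{m alpha} (x) prod_i alpha(-(i+1))^(l i) *)
Definition key := (int * {mset nat}%mset)%type.
Definition V := {malg C[key]}.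

Definition lext (f : key -> V) (v : V) : V := \sum_(x <- msupp v) v@_x *: f x.

(* Heisenberg operator alpha(n) on basis vectors:
   alpha(-(p+1)) = multiplication, alpha(0) = <alpha, m alpha> = 2km,
   alpha(p+1) = 2k(p+1) d/d alpha(-(p+1)). *)
Definition hb (n : int) (x : key) : V :=
  match n with
  | Posz 0 => ((2 * k)%:R * x.1%:~R) *: << x >>
  | Posz p.+1 => ((2 * k * p.+1 * x.2 p)%N)%:R *: << (x.1, msetB x.2 (msetn 1 p)) >>
  | Negz p => << (x.1, msetD (msetn 1 p) x.2) >>
  end.

Definition alpha (n : int) : V -> V := lext (hb n).

Definition vac : V := << ((0:int), (mset0 : {mset nat}%mset)) >>.
Definition eb (m : int) : V := << (m, (mset0 : {mset nat}%mset)) >>.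

Definition wtl (m : int) (l : seq nat) : int :=
  (\sum_(i <- l) i.+1)%N%:Z + (k%:Z * m * m)%R.
Definition wt (x : key) : int := wtl x.1 x.2.

(* coefficients of z^s in E^-(-b alpha, z) = exp(sum_{n>0} b alpha(-n) z^n / n)
   and of z^{-p} in E^+(-b alpha, z) = exp(- sum_{n>0} b alpha(n) z^{-n} / n),
   via  s S_s = sum_{n=1}^s b alpha(-n) S_{s-n}. *)
Fixpoint Sseq (b : int) (s : nat) : seq (V -> V) :=
  match s with
  | 0%N => [:: id]
  | s'.+1 => let L := Sseq b s' in
      rcons L (fun v => (s'.+1%:R)^-1 *:
        \sum_(n < s'.+1) (b%:~R *: alpha (Negz n) (nth id L (s' - n) v)))
  end.
Definition Sop (b : int) (s : nat) : V -> V := nth id (Sseq b s) s.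

Fixpoint Tseq (b : int) (p : nat) : seq (V -> V) :=
  match p with
  | 0%N => [:: id]
  | p'.+1 => let L := Tseq b p' in
      rcons L (fun v => (p'.+1%:R)^-1 *:
        \sum_(n < p'.+1) ((- b)%:~R *: alpha (Posz n.+1) (nth id L (p' - n) v)))
  end.
Definition Top (b : int) (p : nat) : V -> V := nth id (Tseq b p) p.

(* (e^{b alpha})_q applied to the basis vector y, from
   Y(e^beta, z) = E^-(-beta,z) E^+(-beta,z) e_beta z^beta (trivial cocycle):
   coefficient of z^{-q-1}. *)
Definition emode (b : int) (q : int) (y : key) : V :=
  let e := (2 * k%:Z * b * y.1)%R in
  \sum_(p < (\sum_(i <- y.2) i.+1).+1)
     let s := (p%:Z - e - q - 1)%R in
     if (0 <= s)%R then Sop b (absz s) (Top b p << (b + y.1, y.2) >>) else 0.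

(* modes of  alpha(-(i1+1)) ... alpha(-(ir+1)) e^{b alpha}  on basis vectors,
   by the iterate (Borcherds) formula with a = alpha(-1)1, n = i+1:
   (a_{-n} w)_q = sum_{j>=0} C(n+j-1,j) (a_{-n-j} w_{q+j} - (-1)^n w_{q-n-j} a_j);
   the sums are truncated at bounds beyond which all terms vanish
   (w_m u = 0 for m >= wt w + wt u;  a_j u = 0 for j > wt of the Fock part of u). *)
Fixpoint lmode (b : int) (l : seq nat) (q : int) (y : key) {struct l} : V :=
  match l with
  | [::] => emode b q y
  | i :: l' =>
      let n := i.+1 in
      \sum_(j < absz (wtl b l' + wt y - q)%R)
          ('C(n + j - 1, j))%:R *: alpha (- (n + j)%:Z) (lmode b l' (q + j%:Z) y)
      - (-1) ^+ n *:
        \sum_(j < (\sum_(t <- y.2) t.+1).+1)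
          ('C(n + j - 1, j))%:R *: lext (lmode b l' (q - n%:Z - j%:Z)) (hb j y)
  end.

(* v_q u, with Y(v,z) = sum_q v_q z^{-q-1} *)
Definition mode (v : V) (q : int) (u : V) : V :=
  lext (fun x => lext (lmode x.1 (enum_mset x.2) q) u) v.

(* the involution theta lifted from -1 on L *)
Definition theta : V -> V :=
  lext (fun x => (-1) ^+ (size (enum_mset x.2)) *: << (- x.1, x.2) >>).
Definition Vplus (v : V) : Prop := theta v = v.

Definition C2plus (x : V) : Prop :=
  exists (n : nat) (c : 'I_n -> C) (u v : 'I_n -> V),
    (forall i, Vplus (u i) /\ Vplus (v i)) /\
    x = \sum_(i < n) c i *: mode (v i) (-2) (u i).

Definition omega : V := (4 * k)%:R^-1 *: alpha (-1) (alpha (-1) vac).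
Definition Lm2 (v : V) : V := mode omega (-1) v.

Definition Evec : V := eb 1 + eb (-1).

Definition Jvec : V :=
  (4 * k ^ 2)%:R^-1 *: alpha (-1) (alpha (-1) (alpha (-1) (alpha (-1) vac)))
  - (k%:R)^-1 *: alpha (-3) (alpha (-1) vac)
  + (3%:R / (4 * k)%:R) *: alpha (-2) (alpha (-2) vac).

Definition betak : C :=
  ((64 * k ^ 2)%:R - (16 * k)%:R - 18%:R) / (((4 * k)%:R - 1) * ((4 * k)%:R - 9%:R)).

End LatticeVOA.

(* All the vectors involved are explicit, and their expansions depend on the
   level k only polynomially: the only modes that occur are modes of
   zero-momentum vectors on e^{±alpha} and of vectors in M(1) (x) e^{±alpha}
   on zero-momentum vectors, for which the factor z^{2k b m} of the vertex
   operator is trivial.  Computing symbolically over polynomials in k, one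
   checks the identity
     P1 (alpha(-1)^4)_{-1} E + P2 (alpha(-3) alpha(-1))_{-1} E
       + P3 (alpha(-2)^2)_{-1} E + P4 ((alpha(-1)^2)_{-1})^2 E
     = - (Q1 g1 + Q2 g2 + Q3 g3 + Q4 g4)
   where each g_i is a product v_{-2} u with u, v in V_L^+.  As
   alpha(-1)^2 1 = 4k omega, the left-hand side is D (J_{-1} E - beta L(-2)^2 E)
   with D = 16k^2 (4k-1) (4k-9), which is nonzero for k >= 3. *)

From mathcomp Require Import all_boot all_order all_algebra.
From mathcomp Require Import finmap multiset.
From mathcomp.multinomials Require Import monalg.
From mathcomp Require Import ring zify.
Import GRing.Theory Num.Theory.
Local Open Scope ring_scope.

Lemma scale_lincomb4 (R : fieldType) (M : lmodType R) (x1 x2 x3 x4 : M)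
    (d a1 a2 a3 a4 b p1 p2 p3 p4 : R) :
  d * a1 = p1 -> - (d * a2) = p2 -> d * a3 = p3 -> - (d * (b * a4)) = p4 ->
  d *: (a1 *: x1 - a2 *: x2 + a3 *: x3 - b *: (a4 *: x4)) =
  p1 *: x1 + (p2 *: x2 + (p3 *: x3 + p4 *: x4)).
Proof.
by move=> <- <- <- <-; rewrite !scalerDr !scalerN !scalerA !scaleNr !addrA.
Qed.

Section LinearExtension.
Variable C : numClosedFieldType.
Implicit Types (f g : key -> V C) (v w : V C).

Lemma lext_fsubset f v (d : {fset key}) : (msupp v `<=` d)%fset ->
  lext f v = \sum_(x <- d) v@_x *: f x.
Proof.
move=> le; rewrite /lext (big_fset_incl _ le) //.
by move=> x _ /mcoeff_outdom ->; rewrite scale0r.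
Qed.

Lemma lextD f v w : lext f (v + w) = lext f v + lext f w.
Proof.
rewrite (lext_fsubset f _ _ (msuppD_le v w)).
rewrite (lext_fsubset f _ _ (fsubsetUl (msupp v) (msupp w))).
rewrite (lext_fsubset f _ _ (fsubsetUr (msupp v) (msupp w))) -big_split /=.
by apply: eq_bigr => x _; rewrite mcoeffD scalerDl.
Qed.

Lemma lextZ f c v : lext f (c *: v) = c *: lext f v.
Proof.
rewrite (lext_fsubset f _ _ (msuppZ_le c v)) /lext scaler_sumr.
by apply: eq_bigr => x _; rewrite mcoeffZ scalerA.
Qed.

Lemma lextU f c x : lext f << c *g x >> = c *: f x.
Proof. by rewrite (lext_fsubset f _ _ msuppU_le) big_seq_fset1 mcoeffUU. Qed.

Lemma lext0 f : lext f 0 = 0.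
Proof. by rewrite /lext msupp0 big_seq_fset0. Qed.

Lemma lextN f v : lext f (- v) = - lext f v.
Proof. by rewrite -scaleN1r lextZ scaleN1r. Qed.

Lemma lextB f v w : lext f (v - w) = lext f v - lext f w.
Proof. by rewrite lextD lextN. Qed.

Lemma lext_sum f (I : Type) (r : seq I) (F : I -> V C) :
  lext f (\sum_(i <- r) F i) = \sum_(i <- r) lext f (F i).
Proof.
elim: r => [|a r IH]; first by rewrite !big_nil lext0.
by rewrite !big_cons lextD IH.
Qed.

Lemma eq_lext f g v : f =1 g -> lext f v = lext g v.
Proof. by move=> e; apply: eq_bigr => x _; rewrite e. Qed.

Lemma lext_scale f c v : lext (fun x => c *: f x) v = c *: lext f v.
Proof.
rewrite /lext scaler_sumr; apply: eq_bigr => x _.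
by rewrite !scalerA mulrC.
Qed.

End LinearExtension.

Section Modes.
Variables (C : numClosedFieldType) (k : nat).
Implicit Types (u v w : V C).

Lemma alpha0 n : alpha k n (0 : V C) = 0.
Proof. exact: lext0. Qed.

Lemma modeDl v w u q : mode k (v + w) q u = mode k v q u + mode k w q u.
Proof. exact: lextD. Qed.

Lemma modeBl v w u q : mode k (v - w) q u = mode k v q u - mode k w q u.
Proof. exact: lextB. Qed.

Lemma modeZl (c : C) v u q : mode k (c *: v) q u = c *: mode k v q u.
Proof. exact: lextZ. Qed.

Lemma modeZr (c : C) v u q : mode k v q (c *: u) = c *: mode k v q u.
Proof. by rewrite /mode -lext_scale; apply: eq_lext => x; apply: lextZ. Qed.

Lemma C2plus_mode u v : Vplus u -> Vplus v -> C2plus k (mode k v (-2) u).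
Proof.
move=> Vu Vv; exists 1%N, (fun=> 1), (fun=> u), (fun=> v).
by split=> //; rewrite big_ord1 scale1r.
Qed.

Lemma C2plusZ (c : C) (x : V C) : C2plus k x -> C2plus k (c *: x).
Proof.
move=> [n [a [u [v [Vuv ->]]]]]; exists n, (fun i => c * a i), u, v.
split=> //; rewrite scaler_sumr; apply: eq_bigr => i _.
by rewrite scalerA.
Qed.

Lemma C2plusD (x y : V C) : C2plus k x -> C2plus k y -> C2plus k (x + y).
Proof.
move=> [m [a [u [v [Vuv ->]]]]] [n [a' [u' [v' [Vuv' ->]]]]].
pose glue T (f : 'I_m -> T) (g : 'I_n -> T) (i : 'I_(m + n)) :=
  match split i with inl j => f j | inr j => g j end.
exists (m + n)%N, (glue _ a a'), (glue _ u u'), (glue _ v v'); split.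
  by move=> i; rewrite /glue; case: split.
rewrite big_split_ord; apply: (f_equal2 +%R); apply: eq_bigr => i _.
  by rewrite /glue (unsplitK (inl _ i)).
by rewrite /glue (unsplitK (inr _ i)).
Qed.

End Modes.

Lemma seq_msetB1 (s : seq nat) p :
  msetB (seq_mset s) (msetn 1 p) = seq_mset (rem p s).
Proof.
apply/msetP => a; rewrite msetB1E !mset_seqE count_rem /=.
case: (eqVneq a p) => [->|ne]; last by rewrite andbF.
by case: (boolP (p \in s)) => [|/count_memPn ->].
Qed.

Lemma seq_msetD1 (s : seq nat) p :
  msetD (msetn 1 p) (seq_mset s) = seq_mset (p :: s).
Proof. by apply/msetP => a; rewrite mset1DE !mset_seqE /= [p == a]eq_sym. Qed.

Lemma seq_mset_nil : seq_mset [::] = (mset0 : {mset nat}%mset).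
Proof. by apply/msetP => a; rewrite mset_seqE mset0E. Qed.

Definition fockwt (s : seq nat) : nat := sumn (map S s).

Lemma fockwtE (s : seq nat) : (\sum_(i <- s) i.+1)%N = fockwt s.
Proof. by elim: s => [|a s IH]; rewrite ?big_nil ?big_cons ?IH. Qed.

Lemma fockwt_seq_mset (s : seq nat) : (\sum_(i <- seq_mset s) i.+1)%N = fockwt s.
Proof. by rewrite (perm_big _ (perm_eq_seq_mset s)) fockwtE. Qed.

Lemma fockwt_cons i s : fockwt (i :: s) = (i.+1 + fockwt s)%N.
Proof. by []. Qed.

Lemma fockwt_rem {s : seq nat} {p} :
  p \in s -> fockwt s = (p.+1 + fockwt (rem p s))%N.
Proof. by move=> ps; rewrite -!fockwtE (perm_big _ (perm_to_rem ps)) big_cons. Qed.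

(* Polynomials in k with rational coefficients, constant term first. *)
Definition kpoly := seq rat.

Fixpoint padd (p q : kpoly) : kpoly :=
  match p, q with
  | [::], _ => q
  | _, [::] => p
  | a :: p', b :: q' => (a + b) :: padd p' q'
  end.
Definition pscale (a : rat) (p : kpoly) : kpoly := map ( *%R a) p.
Definition pmul (p q : kpoly) : kpoly :=
  foldr (fun a acc => padd (pscale a q) (0 :: acc)) [::] p.
Fixpoint ptrim (p : kpoly) : kpoly :=
  if p is a :: p' then
    let r := ptrim p' in if (r == [::]) && (a == 0) then [::] else a :: r
  else [::].

Definition kint (l : seq int) : kpoly := map intr l.

(* A symbolic vector is a formal combination of basis vectors with
   coefficients in kpoly; the multiset of a basis key is kept as a list. *)
Definition skey := (int * seq nat)%type.
Definition svec := seq (kpoly * skey).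

Definition ikey (x : skey) : key := (x.1, seq_mset x.2).

Definition sscale (p : kpoly) (v : svec) : svec := map (fun t => (pmul p t.1, t.2)) v.
Definition slext (f : skey -> svec) (v : svec) : svec :=
  flatten (map (fun t => sscale t.1 (f t.2)) v).

Section Interpretation.
Variables (C : numClosedFieldType) (k : nat).

Definition peval (p : kpoly) : C := foldr (fun c acc => ratr c + k%:R * acc) 0 p.

Lemma peval_add p q : peval (padd p q) = peval p + peval q.
Proof.
elim: p q => [|a p IH] [|b q] /=; rewrite ?add0r ?addr0 //.
by rewrite IH rmorphD /=; ring.
Qed.

Lemma peval_scale a p : peval (pscale a p) = ratr a * peval p.
Proof. by elim: p => [|b p IH] /=; rewrite ?mulr0 // IH rmorphM /=; ring. Qed.

Lemma peval_mul p q : peval (pmul p q) = peval p * peval q.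
Proof.
elim: p => [|a p IH] /=; first by rewrite mul0r.
by rewrite peval_add peval_scale /= IH rmorph0 /=; ring.
Qed.

Lemma peval_trim p : peval (ptrim p) = peval p.
Proof.
elim: p => [|a p IH] //=.
case: ifP => [/andP[/eqP e /eqP ->]|_] /=; last by rewrite IH.
by rewrite -IH e /= rmorph0 mulr0 addr0.
Qed.

Lemma peval_const c : peval [:: c] = ratr c.
Proof. by rewrite /= mulr0 addr0. Qed.

Lemma peval_lin c : peval [:: 0; c] = k%:R * ratr c.
Proof. by rewrite /= rmorph0 add0r mulr0 addr0. Qed.

Lemma peval1 : peval [:: 1] = 1.
Proof. by rewrite peval_const rmorph1. Qed.

Lemma peval_kint (l : seq int) :
  peval (kint l) = foldr (fun z acc => z%:~R + k%:R * acc) 0 l.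
Proof. by elim: l => [|z l IH] //=; rewrite IH ratr_int. Qed.

Definition interp (v : svec) : V C := \sum_(t <- v) peval t.1 *: << ikey t.2 >>.

Lemma interp_nil : interp [::] = 0.
Proof. by rewrite /interp big_nil. Qed.

Lemma interp_cons c x v : interp ((c, x) :: v) = peval c *: << ikey x >> + interp v.
Proof. by rewrite /interp big_cons. Qed.

Lemma interp_unit x : interp [:: ([:: 1], x)] = << ikey x >>.
Proof. by rewrite interp_cons interp_nil addr0 peval1 scale1r. Qed.

Lemma interp_cat v w : interp (v ++ w) = interp v + interp w.
Proof. by rewrite /interp big_cat. Qed.

Lemma interp_sscale p v : interp (sscale p v) = peval p *: interp v.
Proof.
rewrite /interp big_map scaler_sumr; apply: eq_bigr => t _.
by rewrite peval_mul scalerA.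
Qed.

Lemma interp_sscaleN1 v : interp (sscale [:: -1] v) = - interp v.
Proof. by rewrite interp_sscale peval_const rmorphN1 scaleN1r. Qed.

Lemma interp_sscale_cat4 (p1 p2 p3 p4 : kpoly) (v1 v2 v3 v4 : svec) :
  interp (sscale p1 v1 ++ sscale p2 v2 ++ sscale p3 v3 ++ sscale p4 v4) =
  peval p1 *: interp v1 + (peval p2 *: interp v2
                           + (peval p3 *: interp v3 + peval p4 *: interp v4)).
Proof. by rewrite !interp_cat !interp_sscale. Qed.

Lemma interp_flatten (I : Type) (r : seq I) (F : I -> svec) :
  interp (flatten (map F r)) = \sum_(i <- r) interp (F i).
Proof.
elim: r => [|a r IH] /=; first by rewrite big_nil interp_nil.
by rewrite interp_cat IH big_cons.
Qed.

Lemma lext_interp (F : key -> V C) v :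
  lext F (interp v) = \sum_(t <- v) peval t.1 *: F (ikey t.2).
Proof.
rewrite /interp lext_sum; apply: eq_bigr => t _.
by rewrite lextZ lextU scale1r.
Qed.

Lemma interp_slext (f : skey -> svec) (F : key -> V C) v :
  (forall t, t \in v -> interp (f t.2) = F (ikey t.2)) ->
  interp (slext f v) = lext F (interp v).
Proof.
move=> fF; rewrite /slext interp_flatten lext_interp big_seq [RHS]big_seq.
by apply: eq_bigr => t tv; rewrite interp_sscale fF.
Qed.

End Interpretation.

Definition hb_s (n : int) (x : skey) : svec :=
  match n with
  | Posz 0 => [:: ([:: 0; (2 * x.1)%:~R], x)]
  | Posz p.+1 => [:: ([:: 0; (2 * p.+1 * count_mem p x.2)%N%:R], (x.1, rem p x.2))]
  | Negz p => [:: ([:: 1], (x.1, p :: x.2))]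
  end.
Definition alpha_s (n : int) (v : svec) : svec := slext (hb_s n) v.

Fixpoint Sseq_s (b : int) (s : nat) (v : svec) : seq svec :=
  if s is s'.+1 then
    let L := Sseq_s b s' v in
    rcons L (sscale [:: (s'.+1%:R)^-1]
      (flatten [seq sscale [:: b%:~R] (alpha_s (Negz n) (nth [::] L (s' - n)))
                | n <- index_iota 0 s'.+1]))
  else [:: v].
Definition Sop_s b s v := nth [::] (Sseq_s b s v) s.

Fixpoint Tseq_s (b : int) (p : nat) (v : svec) : seq svec :=
  if p is p'.+1 then
    let L := Tseq_s b p' v in
    rcons L (sscale [:: (p'.+1%:R)^-1]
      (flatten [seq sscale [:: (- b)%:~R]
                      (alpha_s (Posz n.+1) (nth [::] L (p' - n)))
                | n <- index_iota 0 p'.+1]))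
  else [:: v].
Definition Top_s b p v := nth [::] (Tseq_s b p v) p.

(* emode and lmode for [b * y.1 = 0]: then the exponent [2 k b y.1] of [z]
   vanishes and the truncation bounds no longer depend on [k]. *)
Definition emode_s (b q : int) (y : skey) : svec :=
  flatten [seq (let s := (p%:Z - q - 1)%R in
               if (0 <= s)%R
               then Sop_s b (absz s) (Top_s b p [:: ([:: 1], (b + y.1, y.2))])
               else [::]) | p <- index_iota 0 (fockwt y.2).+1].

Fixpoint lmode_s (b : int) (l : seq nat) (q : int) (y : skey) : svec :=
  if l is i :: l' then
    let n := i.+1 in
    let X := ((fockwt l' + fockwt y.2)%N%:Z - q)%R in
    let N := if (0 <= X)%R then absz X else 0%N in
    flatten [seq sscale [:: ('C(n + j - 1, j))%:R]
                  (alpha_s (- (n + j)%:Z) (lmode_s b l' (q + j%:Z) y))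
              | j <- index_iota 0 N]
    ++ sscale [:: - ((-1) ^+ n)]
       (flatten [seq sscale [:: ('C(n + j - 1, j))%:R]
                  (slext (lmode_s b l' (q - n%:Z - j%:Z)) (hb_s j y))
                 | j <- index_iota 0 (fockwt y.2).+1])
  else emode_s b q y.

Definition mode_s (v : svec) (q : int) (u : svec) : svec :=
  slext (fun x => slext (lmode_s x.1 x.2 q) u) v.

Section Soundness.
Variables (C : numClosedFieldType) (k : nat).
Local Notation interp := (interp C k).

Lemma interp_hb_s n x : interp (hb_s n x) = hb C k n (ikey x).
Proof.
case: x => m s; case: n => [[|p]|p]; rewrite interp_cons interp_nil addr0.
- have e : k%:R * (2 * m)%:~R = (2 * k)%:R * m%:~R :> C.
    by rewrite intrM natrM; ring.
  by rewrite peval_lin ratr_int e.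
- have e : k%:R * (2 * p.+1 * count_mem p s)%:R
           = (2 * k * p.+1 * count_mem p s)%:R :> C.
    by rewrite !natrM; ring.
  by rewrite peval_lin ratr_nat /hb /ikey /= mset_seqE seq_msetB1 e.
- by rewrite peval1 scale1r /hb /ikey /= seq_msetD1.
Qed.

Lemma interp_alpha_s n v : interp (alpha_s n v) = alpha k n (interp v).
Proof. by apply: interp_slext => t _; rewrite interp_hb_s. Qed.

Lemma size_Sseq_s b s v : size (Sseq_s b s v) = s.+1.
Proof. by elim: s => //= s IH; rewrite size_rcons IH. Qed.

Lemma size_Sseq b s : size (@Sseq C k b s) = s.+1.
Proof. by elim: s => //= s IH; rewrite size_rcons IH. Qed.

Lemma size_Tseq_s b s v : size (Tseq_s b s v) = s.+1.
Proof. by elim: s => //= s IH; rewrite size_rcons IH. Qed.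

Lemma size_Tseq b s : size (@Tseq C k b s) = s.+1.
Proof. by elim: s => //= s IH; rewrite size_rcons IH. Qed.

Lemma Sseq_sS b s v :
  Sseq_s b s.+1 v = rcons (Sseq_s b s v) (sscale [:: (s.+1%:R)^-1]
    (flatten [seq sscale [:: b%:~R]
                    (alpha_s (Negz n) (nth [::] (Sseq_s b s v) (s - n)))
              | n <- index_iota 0 s.+1])).
Proof. by []. Qed.

Lemma SseqS b s :
  @Sseq C k b s.+1 = rcons (@Sseq C k b s) (fun v => (s.+1%:R)^-1 *:
    \sum_(n < s.+1) (b%:~R *: alpha k (Negz n) (nth id (@Sseq C k b s) (s - n) v))).
Proof. by []. Qed.

Lemma Tseq_sS b s v :
  Tseq_s b s.+1 v = rcons (Tseq_s b s v) (sscale [:: (s.+1%:R)^-1]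
    (flatten [seq sscale [:: (- b)%:~R]
                    (alpha_s (Posz n.+1) (nth [::] (Tseq_s b s v) (s - n)))
              | n <- index_iota 0 s.+1])).
Proof. by []. Qed.

Lemma TseqS b s :
  @Tseq C k b s.+1 = rcons (@Tseq C k b s) (fun v => (s.+1%:R)^-1 *:
    \sum_(n < s.+1)
       ((- b)%:~R *: alpha k (Posz n.+1) (nth id (@Tseq C k b s) (s - n) v))).
Proof. by []. Qed.

Lemma interp_nth_Sseq_s b s v i : (i <= s)%N ->
  interp (nth [::] (Sseq_s b s v) i) = nth id (@Sseq C k b s) i (interp v).
Proof.
elim: s i => [|s IH] i; first by rewrite leqn0 => /eqP ->.
rewrite Sseq_sS SseqS !nth_rcons size_Sseq_s size_Sseq.
rewrite leq_eqVlt => /orP[/eqP ->|lt]; last by rewrite lt IH.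
rewrite ltnn eqxx interp_sscale peval_const fmorphV rmorph_nat.
rewrite interp_flatten big_mkord; congr (_ *: _); apply: eq_bigr => n _.
by rewrite interp_sscale peval_const rmorph_int interp_alpha_s IH // leq_subr.
Qed.

Lemma interp_nth_Tseq_s b s v i : (i <= s)%N ->
  interp (nth [::] (Tseq_s b s v) i) = nth id (@Tseq C k b s) i (interp v).
Proof.
elim: s i => [|s IH] i; first by rewrite leqn0 => /eqP ->.
rewrite Tseq_sS TseqS !nth_rcons size_Tseq_s size_Tseq.
rewrite leq_eqVlt => /orP[/eqP ->|lt]; last by rewrite lt IH.
rewrite ltnn eqxx interp_sscale peval_const fmorphV rmorph_nat.
rewrite interp_flatten big_mkord; congr (_ *: _); apply: eq_bigr => n _.
by rewrite interp_sscale peval_const rmorph_int interp_alpha_s IH // leq_subr.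
Qed.

Lemma interp_emode_s b q y : b * y.1 = 0 ->
  interp (emode_s b q y) = emode C k b q (ikey y).
Proof.
move=> by0; rewrite /emode /emode_s; cbv zeta.
have -> : 2 * k%:Z * b * (ikey y).1 = 0 by rewrite -mulrA by0 mulr0.
rewrite fockwt_seq_mset interp_flatten big_mkord; apply: eq_bigr => p _.
rewrite subr0; case: ifP => _; last by rewrite interp_nil.
by rewrite interp_nth_Sseq_s // interp_nth_Tseq_s // interp_unit.
Qed.

Lemma lmode_cons b i l q y : lmode C k b (i :: l) q y =
  \sum_(0 <= j < absz (wtl k b l + wt k y - q)%R)
      ('C(i.+1 + j - 1, j))%:R
        *: alpha k (- (i.+1 + j)%:Z) (lmode C k b l (q + j%:Z) y)
  - (-1) ^+ i.+1 *: \sum_(0 <= j < (\sum_(t <- y.2) t.+1).+1)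
      ('C(i.+1 + j - 1, j))%:R
        *: lext (lmode C k b l (q - i.+1%:Z - j%:Z)) (hb C k j y).
Proof. by rewrite !big_mkord. Qed.

Lemma lmode_eq0 b l q y : b * y.1 = 0 ->
  ((fockwt l + fockwt y.2)%N%:Z <= q) -> lmode C k b l q (ikey y) = 0.
Proof.
elim: l q y => [|i l IH] q [m s] by0 hq; simpl in by0.
  rewrite /= /emode; cbv zeta.
  have -> : 2 * k%:Z * b * (ikey (m, s)).1 = 0 by rewrite -mulrA by0 mulr0.
  rewrite fockwt_seq_mset; apply: big1 => p _; rewrite ifF //.
  have hp := ltn_ord p; simpl in hp, hq |- *; lia.
rewrite fockwt_cons in hq; simpl in hq.
rewrite lmode_cons big1 => [|j _]; last first.
  by rewrite IH ?alpha0 ?scaler0 //; simpl; lia.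
rewrite big1 ?scaler0 ?subr0 // => j _.
rewrite -interp_hb_s lext_interp.
case: j => [|p] /=.
  by rewrite big_cons big_nil addr0 IH ?scaler0 //; simpl; lia.
rewrite big_cons big_nil addr0.
case: (boolP (p \in s)) => [ps|/count_memPn ->].
  by rewrite IH ?scaler0 //; move: hq; rewrite (fockwt_rem ps) /=; lia.
by rewrite muln0 /= rmorph0 !(mulr0, addr0) scale0r scaler0.
Qed.

Lemma hb_s_momentum {n x t} : t \in hb_s n x -> t.2.1 = x.1.
Proof. by case: n => [[|p]|p]; rewrite inE => /eqP ->. Qed.

Lemma interp_lmode_s b l q y : b * y.1 = 0 ->
  interp (lmode_s b l q y) = lmode C k b l q (ikey y).
Proof.
elim: l q y => [|i l IH] q [m s] by0; simpl in by0; first exact: interp_emode_s.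
rewrite lmode_cons interp_cat interp_sscale !interp_flatten peval_const.
rewrite rmorphN rmorphXn rmorphN1 scaleNr.
congr (_ - _ *: _); last first.
  rewrite fockwt_seq_mset; apply: eq_bigr => j _.
  rewrite interp_sscale peval_const rmorph_nat; congr (_ *: _).
  rewrite -interp_hb_s; apply: interp_slext => -[c [m' s']] ht.
  by rewrite IH //=; have /= -> := hb_s_momentum ht.
rewrite /wt /wtl /= fockwtE fockwt_seq_mset.
set X := ((fockwt l + fockwt s)%N%:Z - q)%R.
set N' := if 0 <= X then absz X else 0%N.
set N := absz _.
(* [N'] drops the nonnegative momentum part [k b^2 + k m^2] of the weight. *)
have hNN : (N' <= N)%N.
  have h1 : 0 <= k%:Z * b * b by rewrite -mulrA mulr_ge0 // sqr_ge0.
  have h2 : 0 <= k%:Z * m * m by rewrite -mulrA mulr_ge0 // sqr_ge0.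
  rewrite /N' /N /X; case: ifP => // hX.
  by rewrite -lez_nat !gez0_abs //; lia.
have tail j : (N' <= j)%N -> lmode C k b l (q + j%:Z) (ikey (m, s)) = 0.
  move=> hj; apply: lmode_eq0 => //=.
  move: hj; rewrite /N' /X; case: ifP => hX hj; last by lia.
  by move: hj; rewrite -lez_nat gez0_abs //; lia.
rewrite (@big_cat_nat _ _ _ N' 0%N N) //=.
rewrite [X in _ = _ + X]big1_seq ?addr0 => [|j /andP[_]]; last first.
  by rewrite mem_index_iota => /andP[hj _]; rewrite tail ?alpha0 ?scaler0.
apply: eq_bigr => j _.
by rewrite interp_sscale peval_const rmorph_nat interp_alpha_s IH.
Qed.

End Soundness.

Fixpoint sinsert (t : kpoly * skey) (v : svec) : svec :=
  if v is t' :: v' then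
    if t'.2 == t.2 then (padd t'.1 t.1, t.2) :: v' else t' :: sinsert t v'
  else [:: t].
Definition nkey (x : skey) : skey := (x.1, sort leq x.2).
Definition snorm (v : svec) : svec :=
  filter (fun t => t.1 != [::]) (map (fun t => (ptrim t.1, t.2))
     (foldr sinsert [::] (map (fun t => (t.1, nkey t.2)) v))).
Definition sveq (v w : svec) : bool := snorm (v ++ sscale [:: -1] w) == [::].

(* [mode] reads the Fock part of [v] in the order of [enum_mset], which is not
   computable; [mode_s] uses the list order instead, so we check that every
   ordering of that list gives the same symbolic result. *)
Definition lmode_perm_inv (x y : skey) (q : int) : bool :=
  all (fun l => sveq (lmode_s x.1 l q y) (lmode_s x.1 x.2 q y)) (permutations x.2).
Definition mode_s_valid (v : svec) (q : int) (u : svec) : bool :=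
  all (fun t => all (fun t' =>
    (t.2.1 * t'.2.1 == 0) && lmode_perm_inv t.2 t'.2 q) u) v.

Definition theta_s (v : svec) : svec :=
  map (fun t =>
    (if odd (size t.2.2) then pscale (-1) t.1 else t.1, (- t.2.1, t.2.2))) v.
Definition vplus_s (v : svec) : bool := sveq (theta_s v) v.

Section NormalFormSoundness.
Variables (C : numClosedFieldType) (k : nat).
Local Notation interp := (interp C k).
Local Notation peval := (peval C k).

Lemma interp_sinsert t v : interp (sinsert t v) = interp (t :: v).
Proof.
case: t => c x; elim: v => [|[c' x'] v IH] //=.
case: ifP => [/eqP e|_].
  by rewrite e !interp_cons peval_add scalerDl -addrA [LHS]addrCA.
by rewrite !interp_cons IH interp_cons [LHS]addrCA.
Qed.

Lemma ikey_nkey x : ikey (nkey x) = ikey x.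
Proof. by case: x => m s; congr (_, _); apply/eq_seq_msetP; rewrite perm_sort. Qed.

Lemma interp_filter (P : pred (kpoly * skey)) v :
  (forall t, ~~ P t -> peval t.1 = 0) -> interp (filter P v) = interp v.
Proof.
move=> P0; elim: v => [|[c x] v IH] //=.
case: ifP => Pt; first by rewrite !interp_cons IH.
by rewrite interp_cons IH (P0 (c, x)) ?Pt // scale0r add0r.
Qed.

Lemma interp_snorm v : interp (snorm v) = interp v.
Proof.
rewrite /snorm interp_filter => [|[c x]]; last by rewrite negbK => /eqP ->.
have interp_trim L : interp [seq (ptrim t.1, t.2) | t <- L] = interp L.
  elim: L => [|[c' x'] L IH] //=.
  by rewrite !interp_cons IH peval_trim.
rewrite interp_trim; elim: v => [|[c x] v IH] //=.
by rewrite interp_sinsert !interp_cons IH ikey_nkey.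
Qed.

Lemma sveqP {v w} : sveq v w -> interp v = interp w.
Proof.
move=> /eqP vw; have := interp_snorm (v ++ sscale [:: -1] w).
rewrite vw interp_nil interp_cat interp_sscale peval_const rmorphN rmorph1.
by move/eqP; rewrite scaleN1r eq_sym subr_eq0 => /eqP.
Qed.

Lemma interp_mode_s {v q u} : mode_s_valid v q u ->
  interp (mode_s v q u) = mode k (interp v) q (interp u).
Proof.
move=> /allP valid; apply: interp_slext => -[c [m s]] vx.
have /allP validx := valid _ vx.
apply: interp_slext => -[d y] uy.
have /andP[/eqP my0 perm_inv] := validx _ uy.
rewrite -interp_lmode_s //; symmetry; apply: sveqP.
move/allP: perm_inv; apply.
by rewrite mem_permutations perm_eq_seq_mset.
Qed.

Lemma theta_interp v : theta (interp v) = interp (theta_s v).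
Proof.
rewrite /theta lext_interp /interp /theta_s big_map.
apply: eq_bigr => -[c [m s]] _ /=.
rewrite (perm_size (perm_eq_seq_mset s)) -signr_odd.
case: (odd (size s)); last by rewrite expr0 scale1r.
by rewrite expr1 peval_scale rmorphN1 scalerA mulrC.
Qed.

Lemma vplus_sP v : vplus_s v -> Vplus (interp v).
Proof. by move=> h; rewrite /Vplus theta_interp; apply: sveqP. Qed.

End NormalFormSoundness.

Definition vac_s : svec := [:: ([:: 1], (0, [::]))].
Definition E_s : svec := [:: ([:: 1], (1, [::])); ([:: 1], (-1, [::]))].
Definition A2_s := alpha_s (-1) (alpha_s (-1) vac_s).
Definition A4_s := alpha_s (-1) (alpha_s (-1) A2_s).
Definition B31_s := alpha_s (-3) (alpha_s (-1) vac_s).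
Definition B22_s := alpha_s (-2) (alpha_s (-2) vac_s).

(* [alpha(-1)^3 (e^alpha - e^-alpha)], [alpha(-1) (e^alpha - e^-alpha)],
   [alpha(-3) (e^alpha - e^-alpha)] and [alpha(-1) alpha(-2) 1]. *)
Definition W1_s : svec :=
  [:: ([:: 1], (1, [:: 0; 0; 0]%N)); ([:: -1], (-1, [:: 0; 0; 0]%N))].
Definition W2_s : svec := [:: ([:: 1], (1, [:: 0]%N)); ([:: -1], (-1, [:: 0]%N))].
Definition W3_s : svec := [:: ([:: 1], (1, [:: 2]%N)); ([:: -1], (-1, [:: 2]%N))].
Definition W4_s : svec := [:: ([:: 1], (0, [:: 0; 1]%N))].

Definition T1_s := mode_s A4_s (-1) E_s.
Definition T2_s := mode_s B31_s (-1) E_s.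
Definition T3_s := mode_s B22_s (-1) E_s.
Definition T4_s := mode_s A2_s (-1) (mode_s A2_s (-1) E_s).

Definition G1_s := mode_s W1_s (-2) vac_s.
Definition G2_s := mode_s A2_s (-2) W2_s.
Definition G3_s := mode_s W3_s (-2) vac_s.
Definition G4_s := mode_s W4_s (-2) E_s.

Definition P1 := kint [:: 36; -160; 64].
Definition P2 := kint [:: 0; -144; 640; -256].
Definition P3 := kint [:: 0; 108; -480; 192].
Definition P4 := kint [:: 18; 16; -64].
Definition Q1 := kint [:: -54; 144].
Definition Q2 := kint [:: 81; -720; 1856; -512].
Definition Q3 := kint [:: 0; -108; 1728; -5760].
Definition Q4 := kint [:: 0; -108; -672; 3392; -512].

Definition Tpart_s : svec :=
  sscale P1 T1_s ++ sscale P2 T2_s ++ sscale P3 T3_s ++ sscale P4 T4_s.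
Definition Gpart_s : svec :=
  sscale Q1 G1_s ++ sscale Q2 G2_s ++ sscale Q3 G3_s ++ sscale Q4 G4_s.

Lemma Tpart_Gpart_s : sveq Tpart_s (sscale [:: -1] Gpart_s).
Proof. by vm_compute. Qed.

Lemma T_modes_s_valid :
  [&& mode_s_valid A4_s (-1) E_s, mode_s_valid B31_s (-1) E_s,
      mode_s_valid B22_s (-1) E_s, mode_s_valid A2_s (-1) E_s
    & mode_s_valid A2_s (-1) (mode_s A2_s (-1) E_s)].
Proof. by vm_compute. Qed.

Lemma G_modes_s_valid :
  [&& mode_s_valid W1_s (-2) vac_s, mode_s_valid A2_s (-2) W2_s,
      mode_s_valid W3_s (-2) vac_s & mode_s_valid W4_s (-2) E_s].
Proof. by vm_compute. Qed.

Lemma G_states_vplus_s : [&& vplus_s vac_s, vplus_s E_s & vplus_s W2_s].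
Proof. by vm_compute. Qed.

Lemma G_fields_vplus_s :
  [&& vplus_s W1_s, vplus_s A2_s, vplus_s W3_s & vplus_s W4_s].
Proof. by vm_compute. Qed.

Section Corollary.
Variables (C : numClosedFieldType) (k : nat).
Local Notation interp := (interp C k).
Local Notation peval := (peval C k).

Lemma interp_vac_s : interp vac_s = vac C.
Proof. by rewrite interp_unit /ikey seq_mset_nil. Qed.

Lemma interp_E_s : interp E_s = Evec C.
Proof. by rewrite interp_cons interp_unit peval1 scale1r /ikey seq_mset_nil. Qed.

Lemma Jmode_E : mode k (Jvec C k) (-1) (Evec C) =
  (4 * k ^ 2)%:R^-1 *: interp T1_s - (k%:R)^-1 *: interp T2_s
  + (3%:R / (4 * k)%:R) *: interp T3_s.
Proof.
case/and5P: T_modes_s_valid => v1 v2 v3 _ _.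
rewrite (interp_mode_s C k v1) (interp_mode_s C k v2) (interp_mode_s C k v3).
rewrite interp_E_s /A4_s /A2_s /B31_s /B22_s !interp_alpha_s interp_vac_s.
by rewrite -!modeZl -modeBl -modeDl.
Qed.

Lemma Lm2_Lm2_E :
  Lm2 k (Lm2 k (Evec C)) = ((4 * k)%:R^-1 * (4 * k)%:R^-1) *: interp T4_s.
Proof.
case/and5P: T_modes_s_valid => _ _ _ v4 v4'.
rewrite (interp_mode_s C k v4') (interp_mode_s C k v4).
rewrite interp_E_s /A2_s !interp_alpha_s interp_vac_s.
by rewrite /Lm2 /omega !modeZl modeZr scalerA.
Qed.

Lemma interp_Tpart :
  interp Tpart_s = peval P1 *: interp T1_s + (peval P2 *: interp T2_s
                   + (peval P3 *: interp T3_s + peval P4 *: interp T4_s)).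
Proof. exact: interp_sscale_cat4. Qed.

Lemma Tpart_Gpart : interp Tpart_s = - interp Gpart_s.
Proof. exact: etrans (sveqP C k Tpart_Gpart_s) (interp_sscaleN1 C k Gpart_s). Qed.

Lemma C2plus_Gpart : C2plus k (interp Gpart_s).
Proof.
case/and4P: G_modes_s_valid => g1 g2 g3 g4.
case/and3P: G_states_vplus_s => Vvac VE VW2.
case/and4P: G_fields_vplus_s => VW1 VA2 VW3 VW4.
rewrite /Gpart_s interp_sscale_cat4 (interp_mode_s C k g1).
rewrite (interp_mode_s C k g2) (interp_mode_s C k g3) (interp_mode_s C k g4).
by repeat apply: C2plusD; apply: C2plusZ; apply: C2plus_mode; apply: vplus_sP.
Qed.

Hypothesis k_ge3 : (3 <= k)%N.

Definition Dk : C := (16 * k ^ 2)%:R * ((4 * k)%:R - 1) * ((4 * k)%:R - 9%:R).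

Lemma nat_factors_neq0 :
  [/\ (k%:R : C) != 0, 4 * (k%:R : C) - 1 != 0 & 4 * (k%:R : C) - 9 != 0].
Proof.
split; first by rewrite pnatr_eq0; apply/eqP; lia.
  by rewrite subr_eq0 -natrM pnatr_eq1; apply/eqP; lia.
by rewrite subr_eq0 -natrM eqr_nat; apply/eqP; lia.
Qed.

Lemma Dk_neq0 : Dk != 0.
Proof.
case: nat_factors_neq0 => k0 k1 k9.
by rewrite /Dk !natrM ?natrX !mulf_neq0 // pnatr_eq0.
Qed.

Lemma Dk_combination (T1 T2 T3 T4 : V C) :
  Dk *: ((4 * k ^ 2)%:R^-1 *: T1 - (k%:R)^-1 *: T2 + (3%:R / (4 * k)%:R) *: T3
         - betak C k *: (((4 * k)%:R^-1 * (4 * k)%:R^-1) *: T4))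
  = peval P1 *: T1 + (peval P2 *: T2 + (peval P3 *: T3 + peval P4 *: T4)).
Proof.
case: nat_factors_neq0 => k0 k1 k9.
apply: scale_lincomb4;
  rewrite /Dk /betak /P1 /P2 /P3 /P4 !peval_kint /= ?natrM ?natrX; field;
  by rewrite ?k0 ?k1 ?k9.
Qed.

End Corollary.

Theorem corollary5p2 (C : numClosedFieldType) (k : nat) (hk : (3 <= k)%N) :
  @C2plus C k (@mode C k (@Jvec C k) (-1) (@Evec C)
               - @betak C k *: @Lm2 C k (@Lm2 C k (@Evec C))).
Proof.
have D0 := Dk_neq0 C k hk.
rewrite -(scalerK D0 (_ - _)) Jmode_E Lm2_Lm2_E Dk_combination //.
rewrite -interp_Tpart Tpart_Gpart scalerN -scaleNr.
exact: C2plusZ (C2plus_Gpart C k).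
Qed.
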